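(* Assume that for every periodic sequence $X$ of positive reals with some period $L$, and every $c\in[0,1]$, the limit $F_X(c):=\lim_{k\to\infty}F_X(k,c)$ exists and $c\mapsto F_X(c)$ is continuous on $[0,1]$. Then for every $M\in\mathbb{R}$ there exist $c>0$ and an integer $d>1$ such that $F_{X_d}(c)>M$.
   Context: For a sequence $X=(x_i)$ of positive reals and $1\le k\le n$, $S(X,n,k):=\binom{n}{k}^{-1}\sum_{1\le i_1<\cdots<i_k\le n}x_{i_1}\cdots x_{i_k}$. For $X$ periodic with period $L$: $F_X(k,c):=S(X,kL,\lceil ckL\rceil)^{1/\lceil ckL\rceil}$ for $c\in(0,1]$ and $F_X(k,0):=(x_1+\cdots+x_L)/L$. Let $P_{GK}(k)=\log_2\left(1+\frac{1}{k(k+2)}\right)$. For an integer $d>1$, $X_d$ is the periodic sequence of period $10d^2$ whose first $10d^2$ entries consist, for each $k\in\{2,\ldots,d\}$, of exactly $\lfloor P_{GK}(k)\cdot 10d^2\rfloor$ entries equal to $k$, with all remaining entries equal to $1$ (in any order; $F_{X_d}(k,c)$ does not depend on the order). *)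

From HB Require Import structures.
From mathcomp Require Import all_boot all_order all_algebra.
From mathcomp Require Import all_classical all_reals all_analysis.
Set Implicit Arguments. Unset Strict Implicit. Unset Printing Implicit Defensive.
Import Order.TTheory GRing.Theory Num.Theory.
Import numFieldNormedType.Exports.
Local Open Scope ring_scope.

(* Sequences are 0-indexed: x_1, x_2, ... of the paper is X 0, X 1, ... *)

Definition Ssym (R : realType) (X : nat -> R) (n k : nat) : R :=
  ('C(n, k)%:R)^-1 *
  \sum_(A : {set 'I_n} | #|A| == k) \prod_(i in A) X (nat_of_ord i).

Definition Fk (R : realType) (X : nat -> R) (L k : nat) (c : R) : R :=
  if c == 0 then (\sum_(i < L) X i) / L%:R
  else let m := `|Num.ceil (c * (k * L)%:R)|%N in
       Ssym X (k * L) m `^ (m%:R^-1).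

Definition periodic_pos (R : realType) (X : nat -> R) (L : nat) : Prop :=
  (0 < L)%N /\ (forall i, X (i + L)%N = X i) /\ (forall i, 0 < X i).

Definition PGK (R : realType) (k : nat) : R :=
  ln (1 + ((k * (k + 2))%:R)^-1) / ln 2.

Definition period_d (d : nat) : nat := (10 * d ^ 2)%N.

Definition count_d (R : realType) (d k : nat) : nat :=
  `|Num.floor (PGK R k * (period_d d)%:R)|%N.

(* First period of X_d: for k = 2..d, count_d d k copies of k, then 1's. *)
Definition block_d (R : realType) (d : nat) : seq R :=
  flatten [seq nseq (count_d R d k) (k%:R : R) | k <- iota 2 d.-1].

Definition Xd (R : realType) (d : nat) : nat -> R :=
  fun i => nth 1 (block_d R d) (i %% period_d d).

(* At c = 0 the function F_X(k, 0) is the mean of one period of X, so the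
   limit function of X_d takes the value mean(X_d) at 0.  About
   10 d^2 P_GK(k) entries of X_d equal k, and since k P_GK(k) is of the order
   of 1/(2(k+1)), this mean grows like (ln d)/2.  Taking d large and then c
   small, continuity at 0 gives F_{X_d}(c) > M. *)

From HB Require Import structures.
From mathcomp Require Import all_boot all_order all_algebra.
From mathcomp Require Import all_classical all_reals all_analysis.
From mathcomp Require Import ring lra zify.
Import Order.TTheory GRing.Theory Num.Theory.
Import numFieldNormedType.Exports.
Local Open Scope ring_scope.

Section LnBounds.
Variable R : realType.

Lemma ln_ge_1_subV (z : R) : 0 < z -> 1 - z^-1 <= ln z.
Proof.
move=> z_gt0; have zV_gt0 : 0 < z^-1 by rewrite invr_gt0.
have := @le_ln1Dx R (z^-1 - 1) ltac:(lra).
by rewrite addrC subrK lnV ?posrE //; lra.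
Qed.

Lemma ln2_ge_half : 1 / 2 <= ln (2 : R).
Proof. have := @ln_ge_1_subV 2 ltac:(lra); lra. Qed.

Lemma ln2_le1 : ln (2 : R) <= 1.
Proof. by have := @le_ln1Dx R 1 ltac:(lra); rewrite [1 + 1]/2. Qed.

Lemma exists_ln_natr_gt (x : R) : exists n, x < ln n.+1%:R.
Proof.
exists (Num.truncn (expR x)).
have /andP[_ lt_x] := truncn_itv (ltW (expR_gt0 x)).
by rewrite -ltr_expR lnK // posrE ltr0n.
Qed.

End LnBounds.

Section GaussKuzmin.
Variable R : realType.

Lemma PGKE (k : nat) : PGK R k = ln (1 + (k%:R * (k%:R + 2))^-1) / ln 2.
Proof. by rewrite /PGK natrM natrD. Qed.

Lemma PGK_ge0 (k : nat) : 0 <= PGK R k.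
Proof.
by rewrite PGKE divr_ge0 ?ln_ge0 ?lerDl ?invr_ge0 ?mulr_ge0 ?addr_ge0.
Qed.

Lemma log2_1DV_le (a : R) : 1 <= a ->
  ln (1 + (a * (a + 2))^-1) / ln 2 <= 2 * (a^-1 - (a + 1)^-1).
Proof.
move=> a_ge1; set y := (a * (a + 2))^-1.
have y_gt0 : 0 < y by rewrite invr_gt0; nra.
have ln_le_y : ln (1 + y) <= y by apply: le_ln1Dx; lra.
have ln_ge0 : 0 <= ln (1 + y) by apply: ln_ge0; lra.
have ln2_ge := ln2_ge_half R.
have div_ln2 : ln (1 + y) / ln 2 <= 2 * ln (1 + y) by rewrite ler_pdivrMr; nra.
suff : y <= a^-1 - (a + 1)^-1 by lra.
have -> : a^-1 - (a + 1)^-1 = (a * (a + 1))^-1 by field; rewrite !gt_eqF //; lra.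
by rewrite lef_pV2 ?posrE; nra.
Qed.

Lemma log2_1DV_ge (a : R) : 1 <= a ->
  (ln (a + 2) - ln (a + 1)) / 2 <= a * (ln (1 + (a * (a + 2))^-1) / ln 2).
Proof.
move=> a_ge1; set y := (a * (a + 2))^-1.
have y_gt0 : 0 < y by rewrite invr_gt0; nra.
have ln_ge : ((a + 1) ^+ 2)^-1 <= ln (1 + y).
  have -> : ((a + 1) ^+ 2)^-1 = 1 - (1 + y)^-1.
    by rewrite /y; field; rewrite !gt_eqF //; nra.
  by apply: ln_ge_1_subV; lra.
have ln_ratio : ln (a + 2) - ln (a + 1) <= (a + 1)^-1.
  rewrite -ln_div ?posrE; try lra.
  have -> : (a + 2) / (a + 1) = 1 + (a + 1)^-1 by field; rewrite gt_eqF //; lra.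
  apply: le_ln1Dx; suff : 0 < (a + 1)^-1 by lra.
  by rewrite invr_gt0; lra.
have div_ln2 : ln (1 + y) <= ln (1 + y) / ln 2.
  have : 0 <= ln (1 + y) by apply: ln_ge0; lra.
  by rewrite ler_pdivlMr ?ln_gt0 //; have := ln2_le1 R; nra.
suff : (a + 1)^-1 / 2 <= a * ((a + 1) ^+ 2)^-1 by nra.
have -> : a * ((a + 1) ^+ 2)^-1 = (a / (a + 1)) * (a + 1)^-1.
  by field; rewrite gt_eqF //; lra.
have : 1 / 2 <= a / (a + 1) by rewrite ler_pdivlMr; lra.
have : 0 < (a + 1)^-1 by rewrite invr_gt0; lra.
nra.
Qed.

Lemma PGK_le_telescope (k : nat) : (0 < k)%N ->
  PGK R k <= 2 * (k%:R^-1 - k.+1%:R^-1).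
Proof. by move=> k_gt0; rewrite PGKE -(natr1 k); apply: log2_1DV_le; rewrite ler1n. Qed.

Lemma PGK_ge_telescope (k : nat) : (0 < k)%N ->
  (ln k.+2%:R - ln k.+1%:R) / 2 <= k%:R * PGK R k.
Proof.
move=> k_gt0; rewrite PGKE -(natr1 k.+1) -(natr1 k) -addrA [1 + 1]/2.
by apply: log2_1DV_ge; rewrite ler1n.
Qed.

Lemma sum_PGK_le1 (n : nat) : \sum_(2 <= k < n) PGK R k <= 1.
Proof.
have [n_le2|n_gt2] := leqP n 2; first by rewrite big_geq.
apply: le_trans (_ : \sum_(2 <= k < n) 2 * (k%:R^-1 - k.+1%:R^-1) <= 1).
  by apply: ler_sum_nat => k /andP[k_ge2 _]; apply: PGK_le_telescope; case: k k_ge2.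
rewrite -mulr_sumr (@telescope_sumr_eq _ 2 n (fun k => - (k%:R : R)^-1)).
- have : 0 <= (n%:R : R)^-1 by rewrite invr_ge0.
  lra.
- exact: ltnW.
- by move=> k _; rewrite opprK addrC.
Qed.

Lemma sum_natr_mul_PGK_ge (n : nat) : (2 <= n)%N ->
  (ln n.+1%:R - ln 3) / 2 <= \sum_(2 <= k < n) k%:R * PGK R k.
Proof.
move=> n_ge2.
apply: le_trans (_ : _ <= \sum_(2 <= k < n) (ln k.+2%:R - ln k.+1%:R) / 2) _.
  rewrite (@telescope_sumr_eq _ 2 n (fun k => ln (k.+1%:R : R) / 2)) //.
  - by rewrite mulrBl.
  - by move=> k _; rewrite mulrBl.
by apply: ler_sum_nat => k /andP[k_ge2 _]; apply: PGK_ge_telescope; case: k k_ge2.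
Qed.

End GaussKuzmin.

Lemma sum_le_sum_nth {R : realType} {s : seq R} {x0 : R} {L : nat} :
  0 <= x0 -> (size s <= L)%N -> \sum_(x <- s) x <= \sum_(i < L) nth x0 s i.
Proof.
move=> x0_ge0 size_le; rewrite (big_nth x0) -(big_mkord xpredT (nth x0 s)).
rewrite (big_cat_nat (leq0n _) size_le) /= lerDl.
rewrite big_nat_cond sumr_ge0 // => i /andP[/andP[size_le_i _] _].
by rewrite nth_default.
Qed.

Section BlockXd.
Variable R : realType.

Lemma block_d_gt0 (d : nat) : all (fun x : R => 0 < x) (block_d R d).
Proof.
apply/allP => x /flattenP[_ /mapP[k k_in ->] /nseqP[-> _]].
by move: k_in; rewrite mem_iota ltr0n => /andP[/ltnW].
Qed.

Lemma Xd_gt0 (d i : nat) : 0 < Xd R d i.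
Proof.
rewrite /Xd; set j := (i %% _)%N.
have [j_lt|j_ge] := ltnP j (size (block_d R d)); last by rewrite nth_default.
exact: (allP (block_d_gt0 d)) _ (mem_nth 1 j_lt).
Qed.

Lemma Xd_periodic_pos (d : nat) : (0 < d)%N -> periodic_pos (Xd R d) (period_d d).
Proof.
move=> d_gt0; split; first by rewrite /period_d muln_gt0 expn_gt0 d_gt0.
by split=> [i|]; [rewrite /Xd modnDr | exact: Xd_gt0].
Qed.

Let iota_block_d (d : nat) : iota 2 d.-1 = index_iota 2 d.+1.
Proof. by rewrite /index_iota subSS subn1. Qed.

Lemma size_block_d (d : nat) :
  (size (block_d R d))%:R = \sum_(2 <= k < d.+1) (count_d R d k)%:R :> R.
Proof.
rewrite /block_d size_flatten sumnE natr_sum /shape -map_comp big_map.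
by rewrite iota_block_d; apply: eq_bigr => k _ /=; rewrite size_nseq.
Qed.

Lemma sum_block_d (d : nat) :
  \sum_(x <- block_d R d) x = \sum_(2 <= k < d.+1) (count_d R d k)%:R * k%:R.
Proof.
rewrite /block_d big_flatten big_map iota_block_d; apply: eq_bigr => k _.
by rewrite big_nseq iter_addr addr0 mulr_natl.
Qed.

Lemma count_d_bounds (d k : nat) :
  PGK R k * (period_d d)%:R - 1 <= (count_d R d k)%:R <= PGK R k * (period_d d)%:R.
Proof.
have PGK_L_ge0 : 0 <= PGK R k * (period_d d)%:R by rewrite mulr_ge0 ?PGK_ge0.
rewrite /count_d; have := truncn_itv PGK_L_ge0.
rewrite truncn_floor PGK_L_ge0 => /andP[-> lt_count]; rewrite andbT.
by move: lt_count; rewrite -natr1; lra.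
Qed.

Lemma size_block_d_le (d : nat) : (size (block_d R d) <= period_d d)%N.
Proof.
rewrite -(ler_nat R) size_block_d.
apply: le_trans (_ : _ <= \sum_(2 <= k < d.+1) PGK R k * (period_d d)%:R) _.
  by apply: ler_sum_nat => k _; case/andP: (count_d_bounds d k).
rewrite -mulr_suml; have := sum_PGK_le1 R d.+1.
by have : 0 <= (period_d d)%:R :> R by []; nra.
Qed.

Lemma sum_natr_le_period (d : nat) : \sum_(2 <= k < d.+1) (k%:R : R) <= (period_d d)%:R.
Proof.
apply: le_trans (_ : _ <= \sum_(2 <= k < d.+1) (d%:R : R)) _.
  by apply: ler_sum_nat => k /andP[_ k_le]; rewrite ler_nat.
by rewrite sumr_const_nat -[leLHS]mulr_natr -natrM ler_nat /period_d; nia.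
Qed.

Lemma sum_block_d_ge (d : nat) :
  (period_d d)%:R * (\sum_(2 <= k < d.+1) k%:R * PGK R k - 1)
    <= \sum_(x <- block_d R d) x.
Proof.
rewrite sum_block_d.
apply: le_trans (_ : _ <= \sum_(2 <= k < d.+1) (PGK R k * (period_d d)%:R - 1) * k%:R) _.
  have -> : \sum_(2 <= k < d.+1) (PGK R k * (period_d d)%:R - 1) * k%:R
      = (period_d d)%:R * \sum_(2 <= k < d.+1) k%:R * PGK R k - \sum_(2 <= k < d.+1) k%:R.
    by rewrite mulr_sumr -sumrB; apply: eq_bigr => k _; ring.
  by have := sum_natr_le_period d; lra.
by apply: ler_sum_nat => k _; apply: ler_wpM2r => //; case/andP: (count_d_bounds d k).
Qed.

End BlockXd.

Definition period_mean {R : realType} (X : nat -> R) (L : nat) : R :=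
  (\sum_(i < L) X i) / L%:R.

Lemma Fk_at0 {R : realType} (X : nat -> R) (L k : nat) : Fk X L k 0 = period_mean X L.
Proof. by rewrite /Fk eqxx. Qed.

Lemma period_mean_Xd_ge (R : realType) (d : nat) : (0 < d)%N ->
  (ln d.+2%:R - ln 3) / 2 - 1 <= period_mean (Xd R d) (period_d d).
Proof.
move=> d_gt0; set L := period_d d.
have L_gt0 : 0 < L%:R :> R by rewrite ltr0n /L /period_d muln_gt0 expn_gt0 d_gt0.
have sum_Xd : \sum_(i < L) Xd R d i = \sum_(i < L) nth 1 (block_d R d) i.
  by apply: eq_bigr => i _; rewrite /Xd modn_small.
have := sum_le_sum_nth ler01 (size_block_d_le R d).
have := sum_block_d_ge R d.
have := sum_natr_mul_PGK_ge R d.+1 d_gt0.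
by rewrite /period_mean ler_pdivlMr // sum_Xd; nra.
Qed.

Lemma period_mean_Xd_unbounded (R : realType) (M : R) :
  exists d, (1 < d)%N /\ M < period_mean (Xd R d) (period_d d).
Proof.
have [n lt_ln] := exists_ln_natr_gt R (2 * (M + 1) + ln 3).
exists n.+2; split=> //; apply: lt_le_trans (period_mean_Xd_ge R _ (ltn0Sn n.+1)).
have : ln n.+1%:R <= ln n.+4%:R :> R by rewrite ler_ln ?posrE ?ltr0n // ler_nat; lia.
lra.
Qed.

Local Open Scope classical_set_scope.

Lemma continuous_within_itv_right_gt {R : realType} {f : R -> R} {a b M : R} :
  a < b -> {within `[a, b], continuous f} -> M < f a ->
  exists c, a < c < b /\ M < f c.
Proof.
move=> a_lt_b f_cont M_lt_fa.
have [_ f_right _] := (continuous_within_itvP f a_lt_b).1 f_cont.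
have : \forall x \near a^'+, a < x < b /\ M < f x.
  near=> x; split; [apply/andP; split|].
  - by near: x; exact: nbhs_right_gt.
  - by near: x; exact: nbhs_right_lt.
  - by near: x; exact: cvgr_gt f_right _ M_lt_fa.
by move=> /filter_ex[c]; exists c.
Unshelve. all: end_near.
Qed.

Theorem lemma5p4 (R : realType) :
  (forall (X : nat -> R) (L : nat), periodic_pos X L ->
     exists Flim : R -> R,
       (forall c : R, 0 <= c <= 1 -> (fun k => Fk X L k c) @ \oo --> Flim c) /\
       {within `[0, 1], continuous Flim}) ->
  forall M : R, exists (c : R) (d : nat),
    0 < c <= 1 /\ (1 < d)%N /\
    exists l : R, (fun k => Fk (Xd R d) (period_d d) k c) @ \oo --> l /\ M < l.
Proof.
move=> limit_Fk M.
have [d [d_gt1 M_lt_mean]] := period_mean_Xd_unbounded R M.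
have [Flim [Fk_cvg Flim_cont]] := limit_Fk _ _ (Xd_periodic_pos R _ (ltnW d_gt1)).
have Flim0 : Flim 0 = period_mean (Xd R d) (period_d d).
  have := Fk_cvg 0 ltac:(by rewrite lexx ler01).
  under eq_fun do rewrite Fk_at0.
  by move=> cvg_mean; apply: cvg_unique cvg_mean (cvg_cst _).
rewrite -Flim0 in M_lt_mean.
have [c [/andP[c_gt0 c_lt1] M_lt_Flimc]] :=
  continuous_within_itv_right_gt ltr01 Flim_cont M_lt_mean.
exists c, d; split; first by rewrite c_gt0 ltW.
split=> //; exists (Flim c); split=> //.
by apply: Fk_cvg; rewrite !ltW.
Qed.
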